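(* For any real continuous function $f\in C(\Omega)$, if $|Kf-f|_\infty\le 1$ then $\|[\mathcal D,\pi(M_f)]\|\le 1$.
   Context: $\Omega=\{0,1\}^{\mathbb N}$ with the shift $\sigma$; for $a\in\{0,1\}$, $ax=(a,x_1,\dots)$. $\mu$ is the measure of maximal entropy (uniform Bernoulli product measure), $L^2(\mu)$ the Hilbert space of square-integrable functions. $|\cdot|_\infty$ is the supremum norm. Ruelle operator $L\phi(x)=\frac12(\phi(0x)+\phi(1x))$; Koopman operator $K\phi=\phi\circ\sigma$. $M_f$ is multiplication $g\mapsto fg$. On $\mathcal H=L^2(\mu)\times L^2(\mu)$ (norm $|(\phi_1,\phi_2)|^2=|\phi_1|^2+|\phi_2|^2$), $\mathcal D=\begin{pmatrix}0&K\\ L&0\end{pmatrix}$, $\pi(A)=\begin{pmatrix}A&0\\0&A\end{pmatrix}$, $[\mathcal D,\pi(A)]=\mathcal D\pi(A)-\pi(A)\mathcal D$; $\|\cdot\|$ is the operator norm. *)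

From HB Require Import structures.
From mathcomp Require Import all_boot all_order all_algebra.
From mathcomp Require Import all_classical all_reals all_analysis.
Set Implicit Arguments. Unset Strict Implicit. Unset Printing Implicit Defensive.
Import Order.TTheory GRing.Theory Num.Theory.
Import numFieldNormedType.Exports.
Local Open Scope classical_set_scope.
Local Open Scope ring_scope.

(* Omega = {0,1}^N (false = 0, true = 1), with the product topology. *)
Notation Omega := cantor_space.

Definition cylinder (w : seq bool) : set Omega :=
  [set x | forall i, (i < size w)%N -> x i = nth false w i].

Definition cylinders : set (set Omega) := [set cylinder w | w in [set: seq bool]].

Definition OmegaM := g_sigma_algebraType cylinders.

Definition is_uniform_bernoulli (R : realType)
  (mu : {measure set OmegaM -> \bar R}) : Prop :=
  forall w : seq bool, mu (cylinder w) = ((2%:R : R) ^- size w)%:E.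

Definition shift (x : Omega) : Omega := fun n => x n.+1.
Definition pref (a : bool) (x : Omega) : Omega :=
  fun n => if n is m.+1 then x m else a.

Section Ops.
Variable R : realType.

Definition Koop (phi : Omega -> R) : Omega -> R := fun x => phi (shift x).
Definition Ruelle (phi : Omega -> R) : Omega -> R :=
  fun x => 2%:R^-1 * (phi (pref false x) + phi (pref true x)).
Definition Mult (f : Omega -> R) (g : Omega -> R) : Omega -> R := fun x => f x * g x.

(* operators on H = L^2 x L^2, elements represented as pairs of functions *)
Definition Hvec := ((Omega -> R) * (Omega -> R))%type.
Definition Dirac (p : Hvec) : Hvec := (Koop p.2, Ruelle p.1).
Definition piop (A : (Omega -> R) -> (Omega -> R)) (p : Hvec) : Hvec :=
  (A p.1, A p.2).
Definition commut (T S : Hvec -> Hvec) (p : Hvec) : Hvec :=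
  (fun x => (T (S p)).1 x - (S (T p)).1 x,
   fun x => (T (S p)).2 x - (S (T p)).2 x).

Definition supnorm (g : Omega -> R) : \bar R :=
  ereal_sup (range (fun x => (`|g x|)%:E)).

Variable mu : {measure set OmegaM -> \bar R}.

Definition inL2 (phi : Omega -> R) : Prop :=
  measurable_fun [set: OmegaM] (phi : OmegaM -> R) /\
  (\int[mu]_x ((phi x) ^+ 2)%:E < +oo)%E.

Definition Hnorm (p : Hvec) : \bar R :=
  sqrte (\int[mu]_x ((p.1 x) ^+ 2)%:E + \int[mu]_x ((p.2 x) ^+ 2)%:E)%E.

Definition inH (p : Hvec) : Prop := inL2 p.1 /\ inL2 p.2.

Definition opnorm (T : Hvec -> Hvec) : \bar R :=
  ereal_sup [set Hnorm (T p) | p in [set p | inH p /\ (Hnorm p <= 1)%E]].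

End Ops.

From Pilot Require Import Defs.
From HB Require Import structures.
From mathcomp Require Import all_boot all_order all_algebra.
From mathcomp Require Import all_classical all_reals all_analysis.
From mathcomp Require Import measurable_realfun.
From mathcomp.algebra_tactics Require Import ring lra.
Set Implicit Arguments. Unset Strict Implicit. Unset Printing Implicit Defensive.
Import Order.TTheory GRing.Theory Num.Theory.
Import numFieldNormedType.Exports.
Local Open Scope classical_set_scope.
Local Open Scope ring_scope.

(* Write p = (phi1, phi2).  The commutator maps p to the pair with components
   (Kf - f)(x) phi2(sigma x)  and  1/2 sum_a (f(ax) - f(x)) phi1(ax);
   as |f(ax) - f(x)| = |Kf - f|(ax) <= 1, their squares are bounded pointwise by
   K(phi2^2) and, by convexity of the square, by L(phi1^2).  The uniform Bernoulli
   measure satisfies mu{x | 0x in A} + mu{x | 1x in A} = 2 mu(A): this holds on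
   cylinders and extends to all measurable sets by uniqueness of measures agreeing
   on a pi-system.  Hence integrals are invariant under K and L, so that
   |[D, pi(M_f)] p| <= |p|. *)

Lemma measurable_cylinder w : @measurable _ OmegaM (cylinder w).
Proof. by apply: sub_sigma_algebra; exists w. Qed.

Lemma cylinder_nil : cylinder [::] = setT.
Proof. by apply/seteqP; split => x //= _ i. Qed.

Lemma preimage_pref_cylinder a w : pref a @^-1` cylinder w =
  if w is b :: w' then if a == b then cylinder w' else set0 else setT.
Proof.
case: w => [|b w]; first by rewrite cylinder_nil.
apply/seteqP; split => x /=.
  move=> xw; have := xw 0%N erefl => /= ->; rewrite eqxx => i lti.
  exact: (xw i.+1).
by case: eqP => [<-|//] xw [|i] //= lti; exact: xw.
Qed.

Lemma preimage_shift_cylinder w : Defs.shift @^-1` cylinder w =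
  cylinder (false :: w) `|` cylinder (true :: w).
Proof.
apply/seteqP; split => x /=.
  move=> xw; case x0: (x 0%N); [right|left] => -[|i] //= lti; exact: xw.
by case=> xw i lti; exact: (xw i.+1).
Qed.

Lemma measurable_pref a : measurable_fun setT (pref a : OmegaM -> OmegaM).
Proof.
apply: (@measurability _ _ OmegaM OmegaM _ _ cylinders erefl) => _ [_ [w _ <-] <-].
rewrite setTI preimage_pref_cylinder.
case: w => [|b w]; first exact: measurableT.
by case: eqP => _; [exact: measurable_cylinder|exact: measurable0].
Qed.

Lemma measurable_shift : measurable_fun setT (Defs.shift : OmegaM -> OmegaM).
Proof.
apply: (@measurability _ _ OmegaM OmegaM _ _ cylinders erefl) => _ [_ [w _ <-] <-].
by rewrite setTI preimage_shift_cylinder; apply: measurableU; exact: measurable_cylinder.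
Qed.

Lemma cylinder_sub w v x : (size w <= size v)%N ->
  cylinder w x -> cylinder v x -> cylinder v `<=` cylinder w.
Proof.
move=> wv xw xv y yv i /[dup] /leq_trans /(_ wv) iv wi.
by rewrite yv // -xv // xw.
Qed.

Definition cylinders0 : set (set OmegaM) := [set set0] `|` cylinders.

Lemma setI_closed_cylinders0 : setI_closed cylinders0.
Proof.
move=> A B [->|[w _ <-]]; first by left; rewrite set0I.
case=> [->|[v _ <-]]; first by left; rewrite setI0.
have [->|/set0P[x [xw xv]]] := eqVneq (cylinder w `&` cylinder v) set0; first by left.
right; case: (leqP (size w) (size v)) => [wv|/ltnW vw].
  by rewrite setIidr; [exists v|exact: cylinder_sub wv xw xv].
by rewrite setIidl; [exists w|exact: cylinder_sub vw xv xw].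
Qed.

Lemma measurable_cylinders0 : @measurable _ OmegaM = <<s cylinders0 >>.
Proof.
apply/seteqP; split; apply: smallest_sub; try exact: smallest_sigma_algebra.
- by move=> A cA; apply: sub_sigma_algebra; right.
- by move=> A [->|cA]; [exact: measurable0|exact: sub_sigma_algebra].
Qed.

Lemma adde_self_inj (R : realDomainType) (c d : \bar R) : (c + c = d + d)%E -> c = d.
Proof. by case: c => [r| |]; case: d => [s| |] //= [] rs; congr EFin; lra. Qed.

Lemma mule_half_double (R : realFieldType) (x : \bar R) :
  ((2^-1)%:E * (x + x))%E = x.
Proof.
have half_gt0 : 0 < 2^-1 :> R by rewrite invr_gt0.
case: x => [r| |] /=; last by rewrite mulrNy gtr0_sg // mul1e.
- by rewrite -EFinD -EFinM; congr EFin; field.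
- by rewrite mulry gtr0_sg // mul1e.
Qed.

Section uniform_bernoulli.
Variables (R : realType) (mu : {measure set OmegaM -> \bar R}).
Hypothesis mu_cylinder : is_uniform_bernoulli mu.

Local Notation mu_pref a :=
  (measure_function_pushforward__canonical__measure_function_Measure mu (measurable_pref a)).

Lemma uniform_bernoulli_setT : mu setT = 1%E.
Proof. by rewrite -cylinder_nil mu_cylinder expr0 invr1. Qed.

Lemma measure_preimage_pref_cylinderD w :
  (mu (pref false @^-1` cylinder w) + mu (pref true @^-1` cylinder w) =
   mu (cylinder w) + mu (cylinder w))%E.
Proof.
rewrite !preimage_pref_cylinder; case: w => [|b w]; first by rewrite cylinder_nil.
have halfD : (2%:R : R) ^- size w = 2%:R ^- (size w).+1 + 2%:R ^- (size w).+1.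
  by rewrite exprS invfM; field; rewrite expf_neq0 ?pnatr_eq0.
by case: b; rewrite /= measure0 ?adde0 ?add0e !mu_cylinder -EFinD halfD.
Qed.

Lemma measure_preimage_prefD (A : set OmegaM) : measurable A ->
  (mu (pref false @^-1` A) + mu (pref true @^-1` A) = mu A + mu A)%E.
Proof.
move=> mA.
transitivity (measure_add (mu_pref false) (mu_pref true) A); first by rewrite measure_addE.
rewrite -measure_addE; apply: (measure_unique cylinders0 (fun=> setT)).
- exact: measurable_cylinders0.
- exact: setI_closed_cylinders0.
- by move=> _; right; exists [::]; rewrite ?cylinder_nil.
- by rewrite bigcup_const.
- move=> _ [->|[w _ <-]]; first by rewrite !measure0.
  apply: etrans (measure_addE _ _ _) (etrans _ (esym (measure_addE _ _ _))).
  exact: measure_preimage_pref_cylinderD.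
- move=> _; rewrite -[X in (X < _)%E]/(measure_add _ _ _) measure_addE /=.
  by rewrite /pushforward !preimage_setT uniform_bernoulli_setT ltry.
- exact: mA.
Qed.

Lemma integral_prefD (h : OmegaM -> \bar R) :
  measurable_fun setT h -> (forall x, 0 <= h x)%E ->
  (\int[mu]_x h (pref false x) + \int[mu]_x h (pref true x) =
   \int[mu]_x h x + \int[mu]_x h x)%E.
Proof.
move=> mh h0.
have pushE a : (\int[mu]_x h (pref a x) = \int[mu_pref a]_x h x)%E.
  by rewrite (ge0_integral_pushforward (measurable_pref a)) ?preimage_setT.
rewrite !pushE -!ge0_integral_measure_add //.
apply: eq_measure_integral => A mA _.
apply: etrans (measure_addE _ _ _) (etrans _ (esym (measure_addE _ _ _))).
exact: measure_preimage_prefD.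
Qed.

Lemma integral_Koop (g : Omega -> R) :
  measurable_fun setT (g : OmegaM -> R) -> (forall x, 0 <= g x) ->
  (\int[mu]_x (Koop g x)%:E = \int[mu]_x (g x)%:E)%E.
Proof.
move=> mg g0; apply/esym/adde_self_inj.
apply: (integral_prefD (h := fun x => (Koop g x)%:E)).
- by apply/measurable_EFinP; exact: (measurableT_comp mg measurable_shift).
- by move=> x; rewrite lee_fin; exact: g0.
Qed.

Lemma integral_Ruelle (g : Omega -> R) :
  measurable_fun setT (g : OmegaM -> R) -> (forall x, 0 <= g x) ->
  (\int[mu]_x (Ruelle g x)%:E = \int[mu]_x (g x)%:E)%E.
Proof.
move=> mg g0.
have mgp a : measurable_fun setT (fun x : OmegaM => (g (pref a x))%:E).
  by apply/measurable_EFinP; exact: measurableT_comp mg (measurable_pref a).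
have gp0 a x : (0 <= (g (pref a x))%:E)%E by rewrite lee_fin.
under eq_integral do rewrite EFinM EFinD.
rewrite ge0_integralZl ?ge0_integralD ?lee_fin ?invr_ge0 //; last 2 first.
- exact: emeasurable_funD.
- by move=> x _; rewrite adde_ge0.
rewrite (integral_prefD (h := fun x => (g x)%:E)); last 2 first.
- by apply/measurable_EFinP.
- by move=> x; rewrite lee_fin.
exact: mule_half_double.
Qed.

End uniform_bernoulli.

Lemma le_supnorm (R : realType) (g : Omega -> R) x : ((`|g x|)%:E <= supnorm g)%E.
Proof. by apply: ereal_sup_ubound; exists x. Qed.

Lemma ge0_le_integral_setT d (T : measurableType d) (R : realType)
    (mu : {measure set T -> \bar R}) (g h : T -> \bar R) :
  (forall x, 0 <= g x)%E -> (forall x, g x <= h x)%E ->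
  (\int[mu]_x g x <= \int[mu]_x h x)%E.
Proof.
move=> g0 gh; have h0 x : (0 <= h x)%E by exact: le_trans (g0 x) (gh x).
rewrite !ge0_integralTE //=.
apply: ge_ereal_sup => _ [s sg <-]; apply: ereal_sup_ubound; exists s => //= x.
exact: le_trans (sg x) (gh x).
Qed.

Lemma sqr_mul_le (R : realDomainType) (c a : R) : `|c| <= 1 -> (c * a) ^+ 2 <= a ^+ 2.
Proof.
move=> c1; rewrite exprMn -[leRHS]mul1r ler_wpM2r ?sqr_ge0 //.
by rewrite -real_normK ?num_real // exprn_ile1.
Qed.

Lemma sqr_half_add_le (R : realFieldType) (u v : R) :
  (2^-1 * (u + v)) ^+ 2 <= 2^-1 * (u ^+ 2 + v ^+ 2).
Proof. have := sqr_ge0 (u - v); nra. Qed.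

Lemma opnorm_le1 (R : realType) (mu : {measure set OmegaM -> \bar R})
    (T : Hvec R -> Hvec R) :
  (forall p, inH mu p -> (Hnorm mu (T p) <= Hnorm mu p)%E) -> (opnorm mu T <= 1)%E.
Proof.
by move=> Tle; apply: ge_ereal_sup => _ [p [Hp p_le1] <-]; exact: le_trans (Tle p Hp) p_le1.
Qed.

Section commutator.
Variables (R : realType) (f : Omega -> R).

Local Notation T := (commut (@Dirac R) (piop (Mult f))).

Lemma commut_Dirac_Mult_fst p x : (T p).1 x = (Koop f x - f x) * Koop p.2 x.
Proof. by rewrite /= /Koop /Mult; ring. Qed.

Lemma commut_Dirac_Mult_snd p x : (T p).2 x =
  2^-1 * ((f (pref false x) - f x) * p.1 (pref false x) +
          (f (pref true x) - f x) * p.1 (pref true x)).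
Proof. by rewrite /= /Ruelle /Mult; ring. Qed.

Hypothesis Kf_sub_f : forall x, `|Koop f x - f x| <= 1.

Lemma commut_Dirac_Mult_fst_sqr_le p x : (T p).1 x ^+ 2 <= Koop (fun y => p.2 y ^+ 2) x.
Proof. by rewrite commut_Dirac_Mult_fst sqr_mul_le. Qed.

Lemma commut_Dirac_Mult_snd_sqr_le p x :
  (T p).2 x ^+ 2 <= Ruelle (fun y => p.1 y ^+ 2) x.
Proof.
have f_pref a : `|f (pref a x) - f x| <= 1 by rewrite distrC; exact: Kf_sub_f.
rewrite commut_Dirac_Mult_snd; apply: le_trans; first exact: sqr_half_add_le.
by rewrite /Ruelle ler_wpM2l ?invr_ge0 // lerD // sqr_mul_le.
Qed.

Variables (mu : {measure set OmegaM -> \bar R}).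
Hypothesis mu_cylinder : is_uniform_bernoulli mu.

Lemma Hnorm_commut_Dirac_Mult_le p : inH mu p -> (Hnorm mu (T p) <= Hnorm mu p)%E.
Proof.
move=> [[mp1 _] [mp2 _]].
have sqr0 (g : Omega -> R) x : (0 <= (g x ^+ 2)%:E)%E by rewrite lee_fin sqr_ge0.
rewrite /Hnorm lee_sqrt; last by rewrite adde_ge0 // integral_ge0.
rewrite [leRHS]addeC; apply: leeD.
- rewrite -[leRHS](integral_Koop mu_cylinder); last 2 first.
  + exact: measurable_funX.
  + by move=> x; exact: sqr_ge0.
  apply: ge0_le_integral_setT => // x.
  by rewrite lee_fin commut_Dirac_Mult_fst_sqr_le.
- rewrite -[leRHS](integral_Ruelle mu_cylinder); last 2 first.
  + exact: measurable_funX.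
  + by move=> x; exact: sqr_ge0.
  apply: ge0_le_integral_setT => // x.
  by rewrite lee_fin commut_Dirac_Mult_snd_sqr_le.
Qed.

End commutator.

Theorem corollary2p17 (R : realType) (mu : {measure set OmegaM -> \bar R})
  (hmu : is_uniform_bernoulli mu) (f : Omega -> R) (hf : continuous f)
  (hKf : (supnorm (fun x : Omega => (Koop f x - f x)%R) <= 1)%E) :
  (opnorm mu (commut (@Dirac R) (piop (Mult f))) <= 1)%E.
Proof.
have Kf_sub_f x : `|Koop f x - f x| <= 1.
  by rewrite -lee_fin (le_trans (le_supnorm _ x) hKf).
by apply: opnorm_le1 => p; exact: Hnorm_commut_Dirac_Mult_le.
Qed.
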